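(* Let $\mathcal{A}s_2\langle X\rangle$ be the free second-type associative algebra on a countable set $X$ of generators over a field of characteristic $0$. Then for all elements $a,b,c,d,e\in\mathcal{A}s_2\langle X\rangle$ the following identities hold: \[ dcab = dcba + cdab - cdba + adcb - acdb, \] \[ abcde=abdce=acbde . \]
   Context: An associative algebra is called of the second type if it satisfies the identity $abc-acb-bac+bca+cab-cba=0$ for all $a,b,c$. $\mathcal{A}s_2$ denotes the variety of second-type associative algebras and $\mathcal{A}s_2\langle X\rangle$ its free algebra on the generating set $X$ (the free associative algebra on $X$ modulo the T-ideal generated by this identity). The base field has characteristic $0$. *)

From HB Require Import structures.
From mathcomp Require Import all_boot all_order all_algebra.
From mathcomp Require Import finmap.
From mathcomp.multinomials Require Import monalg.
Set Implicit Arguments. Unset Strict Implicit. Unset Printing Implicit Defensive.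
Import GRing.Theory.
Local Open Scope ring_scope.

(* The free unital associative algebra F<X> on the countable set X = nat of
   generators: finitely supported F-linear combinations of words
   (free monoid {fmonom nat}) with concatenation product. *)
Definition freeAs (F : fieldType) := {malg F[{fmonom nat}]}.

(* The free (non-unital) associative algebra As<X>: the elements of F<X>
   with zero constant term (coefficient of the empty word). *)
Definition nonunital (F : fieldType) (p : freeAs F) : Prop :=
  p@_(mone : {fmonom nat}) = 0.

Definition as2_poly (F : fieldType) (a b c : freeAs F) : freeAs F :=
  a * b * c - a * c * b - b * a * c + b * c * a + c * a * b - c * b * a.

(* The T-ideal of As<X> generated by as2_poly: the two-sided ideal of the
   non-unital algebra As<X> generated by all values as2_poly p q r with
   p, q, r in As<X>; its elements are the finite sums of u * f(p,q,r) * v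
   with u, v in F<X> (u, v may be scalars, covering f, u f, f v and scalar
   multiples).  This ideal is stable under all endomorphisms of As<X>,
   i.e. it is the T-ideal generated by the identity. *)
Definition as2_Tideal (F : fieldType) (x : freeAs F) : Prop :=
  exists s : seq (freeAs F * freeAs F * freeAs F * freeAs F * freeAs F),
    (forall t, t \in s -> [/\ nonunital t.1.1.1.2, nonunital t.1.1.2
                              & nonunital t.1.2]) /\
    x = \sum_(t <- s) t.1.1.1.1 * as2_poly t.1.1.1.2 t.1.1.2 t.1.2 * t.2.

Definition as2_eq (F : fieldType) (x y : freeAs F) : Prop :=
  as2_Tideal (x - y).

(* Each identity holds in As_2<X> because N (lhs - rhs), for N = 2, 12, 6,
   is an integer combination of terms u * s3(p, q, r) * v whose arguments
   p, q, r are products of the letters; such combinations are found by linear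
   algebra in the multilinear component of degree 4 or 5.  Each of them is an
   identity valid in every ring, checked by reflexive normalization of
   noncommutative ring expressions, and in characteristic 0 the factor N can
   be divided out. *)

From HB Require Import structures.
From mathcomp Require Import all_boot all_order all_algebra.
From mathcomp.multinomials Require Import monalg.
Set Implicit Arguments. Unset Strict Implicit.
Import GRing.Theory.
Local Open Scope ring_scope.

Section NoncommRing.
Variable R : pzRingType.
Implicit Types (env : seq R) (w : seq nat).

Inductive ring_term :=
  | TVar of nat | TZero | TOne | TOpp of ring_term
  | TAdd of ring_term & ring_term | TMul of ring_term & ring_term
  | TIntMul of ring_term & int.

Fixpoint eval_term env t : R :=
  match t with
  | TVar i => env`_i | TZero => 0 | TOne => 1 | TOpp t => - eval_term env t
  | TAdd t1 t2 => eval_term env t1 + eval_term env t2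
  | TMul t1 t2 => eval_term env t1 * eval_term env t2
  | TIntMul t n => eval_term env t *~ n
  end.

(* A noncommutative polynomial is a list of monomials [(n, w)] standing for
   [n] times the word [w] in the variables; monomials with equal words are
   not merged. *)
Definition ncpoly := seq (int * seq nat).

Definition eval_word env w : R := \prod_(i <- w) env`_i.

Definition eval_poly env (m : ncpoly) : R :=
  \sum_(x <- m) eval_word env x.2 *~ x.1.

Definition mul_poly (m1 m2 : ncpoly) : ncpoly :=
  [seq (x.1 * y.1, x.2 ++ y.2) | x <- m1, y <- m2].

Fixpoint normalize t : ncpoly :=
  match t with
  | TVar i => [:: (1, [:: i])] | TZero => [::] | TOne => [:: (1, [::])]
  | TOpp t => [seq (- x.1, x.2) | x <- normalize t]
  | TAdd t1 t2 => normalize t1 ++ normalize t2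
  | TMul t1 t2 => mul_poly (normalize t1) (normalize t2)
  | TIntMul t n => [seq (x.1 * n, x.2) | x <- normalize t]
  end.

Lemma eval_mul_poly env m1 m2 :
  eval_poly env (mul_poly m1 m2) = eval_poly env m1 * eval_poly env m2.
Proof.
rewrite /eval_poly big_allpairs_dep mulr_suml; apply: eq_bigr => x _.
rewrite mulr_sumr; apply: eq_bigr => y _ /=.
by rewrite /eval_word big_cat mulrzAl mulrzAr -mulrzA mulrC.
Qed.

Lemma eval_normalize env t : eval_term env t = eval_poly env (normalize t).
Proof.
rewrite /eval_poly; elim: t => [i|||t IH|t1 IH1 t2 IH2|t1 IH1 t2 IH2|t IH n] /=.
- by rewrite big_seq1 /eval_word big_seq1.
- by rewrite big_nil.
- by rewrite big_seq1 /eval_word big_nil.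
- by rewrite IH big_map -sumrN; apply: eq_bigr => x _; rewrite mulrNz.
- by rewrite IH1 IH2 big_cat.
- by rewrite IH1 IH2 -eval_mul_poly.
- by rewrite IH big_map mulrz_suml; apply: eq_bigr => x _; rewrite mulrzA.
Qed.

Fixpoint coef (m : ncpoly) w : int :=
  if m is x :: m' then (if x.2 == w then x.1 else 0) + coef m' w else 0.

Lemma coefE m w : coef m w = \sum_(x <- m | x.2 == w) x.1.
Proof.
elim: m => [|x m IH]; first by rewrite big_nil.
by rewrite big_cons /= IH; case: ifP; rewrite ?add0r.
Qed.

Lemma eval_poly_words env m :
  eval_poly env m = \sum_(w <- undup (unzip2 m)) eval_word env w *~ coef m w.
Proof.
symmetry; under eq_bigr => w _ do rewrite coefE mulrz_sumr.
rewrite (exchange_big_dep predT) //=; apply: eq_big_seq => x x_in_m.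
have x_word : x.2 \in undup (unzip2 m) by rewrite mem_undup map_f.
rewrite -big_filter (eq_filter (a2 := pred1 x.2)) => [|w]; last first.
  by rewrite /= eq_sym.
by rewrite filter_pred1_uniq ?undup_uniq // big_seq1.
Qed.

Lemma eval_term_eq env t1 t2 :
  let m := normalize (TAdd t1 (TOpp t2)) in
  all (fun w => coef m w == 0) (unzip2 m) ->
  eval_term env t1 = eval_term env t2.
Proof.
move=> m /allP coef0; apply/eqP; rewrite -subr_eq0.
rewrite -[_ - _]/(eval_term env (TAdd t1 (TOpp t2))) eval_normalize.
rewrite eval_poly_words big1_seq // => w /andP[_].
by rewrite mem_undup => /coef0 /eqP ->.
Qed.

End NoncommRing.

Ltac term_index x l :=
  lazymatch l with
  | x :: _ => constr:(0%N)
  | _ :: ?l' => let n := term_index x l' in constr:(n.+1)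
  end.

Ltac term_atoms e l :=
  lazymatch e with
  | @GRing.zero _ => l
  | @GRing.one _ => l
  | @GRing.opp _ ?a => term_atoms a l
  | @GRing.add _ ?a ?b => let l := term_atoms a l in term_atoms b l
  | @GRing.mul _ ?a ?b => let l := term_atoms a l in term_atoms b l
  | @intmul _ ?a _ => term_atoms a l
  | _ => match l with context [e] => l | _ => constr:(e :: l) end
  end.

Ltac reify_term e l :=
  lazymatch e with
  | @GRing.zero _ => constr:(TZero)
  | @GRing.one _ => constr:(TOne)
  | @GRing.opp _ ?a => let t := reify_term a l in constr:(TOpp t)
  | @GRing.add _ ?a ?b =>
      let t1 := reify_term a l in let t2 := reify_term b l in
      constr:(TAdd t1 t2)
  | @GRing.mul _ ?a ?b =>
      let t1 := reify_term a l in let t2 := reify_term b l in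
      constr:(TMul t1 t2)
  | @intmul _ ?a ?n => let t := reify_term a l in constr:(TIntMul t n)
  | _ => let i := term_index e l in constr:(TVar i)
  end.

Ltac noncomm_ring :=
  lazymatch goal with
  | |- @eq ?T ?lhs ?rhs =>
      let l := term_atoms lhs (@nil T) in
      let l := term_atoms rhs l in
      let t1 := reify_term lhs l in
      let t2 := reify_term rhs l in
      change (@eval_term _ l t1 = @eval_term _ l t2);
      apply: eval_term_eq; vm_compute; reflexivity
  end.

Definition s3 (R : pzRingType) (a b c : R) : R :=
  a * b * c - a * c * b - b * a * c + b * c * a + c * a * b - c * b * a.

Record s3_term (R : Type) := S3Term {
  s3_coef : int; s3_left : R; s3_x : R; s3_y : R; s3_z : R; s3_right : R }.

Definition s3_comb (R : pzRingType) (L : seq (s3_term R)) : R :=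
  \sum_(t <- L)
    (s3_left t * s3 (s3_x t) (s3_y t) (s3_z t) * s3_right t) *~ s3_coef t.

Definition dcab_cert (R : pzRingType) (a b c d : R) : seq (s3_term R) :=
  [:: S3Term 1 1 a b c d;
      S3Term (-2) 1 a b (c * d) 1;
      S3Term 1 1 a (b * c) d 1;
      S3Term (-1) 1 a b d c;
      S3Term 2 1 a b (d * c) 1;
      S3Term (-1) 1 a (b * d) c 1;
      S3Term (-1) 1 (b * a) c d 1;
      S3Term 1 1 b c d a].

Definition abcde_abdce_cert (R : pzRingType) (a b c d e : R) :
  seq (s3_term R) :=
  [:: S3Term (-5) 1 a b c (d * e);
      S3Term (-4) 1 (a * b) c d e;
      S3Term (-1) 1 (a * b * c) d e 1;
      S3Term 8 a b c d e;
      S3Term (-3) a b c (d * e) 1;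
      S3Term 7 a b (c * d) e 1;
      S3Term 2 a (b * c) d e 1;
      S3Term 8 (a * b) c d e 1;
      S3Term 6 1 a b (c * e) d;
      S3Term (-3) 1 (a * b) c e d;
      S3Term 2 1 (a * b) c (e * d) 1;
      S3Term 2 1 (a * b) (c * e) d 1;
      S3Term (-5) a b c e d;
      S3Term 6 a b c (e * d) 1;
      S3Term 1 a b (c * e) d 1;
      S3Term 1 1 a b d (c * e);
      S3Term (-1) 1 (a * b * d) c e 1;
      S3Term (-5) a b (d * c) e 1;
      S3Term 8 a (b * d) c e 1;
      S3Term (-2) 1 a b d (e * c);
      S3Term 2 1 a b (d * e) c;
      S3Term (-2) 1 a (b * d) e c;
      S3Term (-1) 1 (a * b) d e c;
      S3Term (-1) a b d e c;
      S3Term 4 1 a b e (c * d);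
      S3Term (-4) 1 a b (e * c) d;
      S3Term 1 1 (a * b * e) c d 1;
      S3Term (-10) a (b * e) c d 1;
      S3Term 4 1 a b e (d * c);
      S3Term (-4) 1 a b (e * d) c;
      S3Term 3 1 (a * c) b d e;
      S3Term (-2) 1 (a * c) b (d * e) 1;
      S3Term 2 1 (a * c) (b * d) e 1;
      S3Term 6 1 (a * c * b) d e 1;
      S3Term (-1) a (c * b) d e 1;
      S3Term (-8) 1 (a * c) b e d;
      S3Term 4 1 (a * c) b (e * d) 1;
      S3Term 3 1 a c d (b * e);
      S3Term (-2) 1 (a * c) (d * b) e 1;
      S3Term 4 1 (a * c * d) b e 1;
      S3Term 7 a c (d * b) e 1;
      S3Term (-4) 1 (a * c) d e b;
      S3Term 2 a c d e b;
      S3Term (-2) 1 (a * c * e) b d 1;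
      S3Term 2 1 a c e (d * b);
      S3Term (-2) 1 a c (e * d) b;
      S3Term (-2) 1 a (c * e) d b;
      S3Term 5 1 (a * d) b c e;
      S3Term (-6) 1 (a * d) b (c * e) 1;
      S3Term 2 1 (a * d * b) c e 1;
      S3Term 2 1 a (d * b) e c;
      S3Term (-4) 1 (a * d) b e c;
      S3Term 4 1 (a * d) b (e * c) 1].

Definition abdce_acbde_cert (R : pzRingType) (a b c d e : R) :
  seq (s3_term R) :=
  [:: S3Term 8 1 a b c (d * e);
      S3Term 6 1 a b (c * d) e;
      S3Term (-6) 1 a (b * c) d e;
      S3Term 4 1 (a * b) c d e;
      S3Term (-3) 1 (a * b) c (d * e) 1;
      S3Term 3 1 (a * b) (c * d) e 1;
      S3Term 10 1 (a * b * c) d e 1;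
      S3Term (-17) a b c d e;
      S3Term 21 a b c (d * e) 1;
      S3Term (-13) a b (c * d) e 1;
      S3Term (-17) a (b * c) d e 1;
      S3Term 4 (a * b) c d e 1;
      S3Term (-12) 1 a b c (e * d);
      S3Term 3 1 a b (c * e) d;
      S3Term (-3) 1 a (b * c) e d;
      S3Term (-9) 1 a (b * c) (e * d) 1;
      S3Term 9 1 a (b * c * e) d 1;
      S3Term (-3) 1 (a * b) c e d;
      S3Term 1 1 (a * b) c (e * d) 1;
      S3Term 4 1 (a * b) (c * e) d 1;
      S3Term 20 a b c e d;
      S3Term (-15) a b c (e * d) 1;
      S3Term 2 a b (c * e) d 1;
      S3Term (-1) 1 a b d (c * e);
      S3Term 3 1 a b (d * c) e;
      S3Term 3 1 a b (d * c * e) 1;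
      S3Term (-3) 1 a (b * d) (c * e) 1;
      S3Term 7 1 (a * b * d) c e 1;
      S3Term 5 a b (d * c) e 1;
      S3Term (-11) a (b * d) c e 1;
      S3Term 8 1 a b d (e * c);
      S3Term (-5) 1 a b (d * e) c;
      S3Term (-3) 1 a b (d * e * c) 1;
      S3Term 8 1 a (b * d) e c;
      S3Term 3 1 a (b * d * e) c 1;
      S3Term (-2) 1 (a * b) d e c;
      S3Term 1 a b d e c;
      S3Term (-7) 1 a b e (c * d);
      S3Term 4 1 a b (e * c) d;
      S3Term 3 1 a b (e * c * d) 1;
      S3Term 3 1 a (b * e) c d;
      S3Term (-3) 1 a (b * e) (c * d) 1;
      S3Term (-4) 1 (a * b * e) c d 1;
      S3Term 7 a (b * e) c d 1;
      S3Term (-13) 1 a b e (d * c);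
      S3Term 16 1 a b (e * d) c;
      S3Term (-3) 1 a b (e * d * c) 1;
      S3Term (-6) 1 a (b * e) d c;
      S3Term 3 1 a (b * e * d) c 1;
      S3Term 3 1 a (c * b) (d * e) 1;
      S3Term (-12) 1 (a * c) b d e;
      S3Term 8 1 (a * c) b (d * e) 1;
      S3Term (-8) 1 (a * c) (b * d) e 1;
      S3Term (-9) 1 (a * c * b) d e 1;
      S3Term 16 a (c * b) d e 1;
      S3Term 3 1 a (c * b) e d;
      S3Term 3 1 a (c * b) (e * d) 1;
      S3Term 14 1 (a * c) b e d;
      S3Term (-10) 1 (a * c) b (e * d) 1;
      S3Term 3 1 (a * c) (b * e) d 1;
      S3Term (-3) 1 a (c * d * b) e 1;
      S3Term 5 1 (a * c) (d * b) e 1;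
      S3Term (-4) 1 (a * c * d) b e 1;
      S3Term (-7) a c (d * b) e 1;
      S3Term (-2) 1 (a * c) d e b;
      S3Term (-2) a c d e b;
      S3Term (-3) 1 a (c * e * b) d 1;
      S3Term 2 1 (a * c * e) b d 1;
      S3Term 4 1 a c e (d * b);
      S3Term (-4) 1 a c (e * d) b;
      S3Term (-1) 1 a (c * e) d b;
      S3Term 9 1 a (d * b * c) e 1;
      S3Term (-14) 1 (a * d) b c e;
      S3Term 6 1 (a * d) b (c * e) 1;
      S3Term 3 1 (a * d) (b * c) e 1;
      S3Term (-11) 1 (a * d * b) c e 1;
      S3Term (-8) 1 a (d * b) e c;
      S3Term 7 1 (a * d) b e c;
      S3Term (-7) 1 (a * d) b (e * c) 1;
      S3Term 3 1 (b * a) c d e;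
      S3Term 3 1 (b * a * c) d e 1;
      S3Term 6 1 (b * a) c (e * d) 1;
      S3Term (-6) 1 (b * a) (c * e) d 1;
      S3Term (-6) 1 (b * a) (d * c) e 1;
      S3Term 3 1 b (c * a) d e].

Lemma dcab_certP (R : pzRingType) (a b c d : R) :
  (d * c * a * b - (d * c * b * a + c * d * a * b - c * d * b * a
                    + a * d * c * b - a * c * d * b)) *~ 2
  = s3_comb (dcab_cert a b c d).
Proof.
by rewrite /s3_comb /dcab_cert !big_cons big_nil /s3 /=; noncomm_ring.
Qed.

Lemma abcde_abdce_certP (R : pzRingType) (a b c d e : R) :
  (a * b * c * d * e - a * b * d * c * e) *~ 12
  = s3_comb (abcde_abdce_cert a b c d e).
Proof.
by rewrite /s3_comb /abcde_abdce_cert !big_cons big_nil /s3 /=; noncomm_ring.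
Qed.

Lemma abdce_acbde_certP (R : pzRingType) (a b c d e : R) :
  (a * b * d * c * e - a * c * b * d * e) *~ 6
  = s3_comb (abdce_acbde_cert a b c d e).
Proof.
by rewrite /s3_comb /abdce_acbde_cert !big_cons big_nil /s3 /=; noncomm_ring.
Qed.

Section SecondTypeIdeal.
Variable F : fieldType.
Implicit Types (x y u v p q r : freeAs F) (L : seq (s3_term (freeAs F))).

Lemma nonunitalM x y : nonunital x -> nonunital y -> nonunital (x * y).
Proof.
rewrite /nonunital => x0 _.
have [coef1M _] := @mcoeff1g_is_multiplicative {fmonom nat} F.
by rewrite coef1M x0 mul0r.
Qed.

Lemma as2_Tideal0 : as2_Tideal (0 : freeAs F).
Proof. by exists [::]; rewrite big_nil. Qed.

Lemma as2_TidealD x y : as2_Tideal x -> as2_Tideal y -> as2_Tideal (x + y).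
Proof.
move=> [s [s_nu ->]] [s' [s'_nu ->]]; exists (s ++ s'); rewrite big_cat.
by split=> // t; rewrite mem_cat => /orP[/s_nu | /s'_nu].
Qed.

Lemma as2_TidealZ k x : as2_Tideal x -> as2_Tideal (k *: x).
Proof.
move=> [s [s_nu ->]].
exists [seq (k *: t.1.1.1.1, t.1.1.1.2, t.1.1.2, t.1.2, t.2) | t <- s].
split; first by move=> _ /mapP[t /s_nu t_nu ->].
by rewrite big_map scaler_sumr; apply: eq_bigr => t _; rewrite -!scalerAl.
Qed.

Lemma as2_Tideal_s3 u p q r v :
  nonunital p -> nonunital q -> nonunital r -> as2_Tideal (u * s3 p q r * v).
Proof.
move=> p0 q0 r0; exists [:: (u, p, q, r, v)]; rewrite big_seq1.
by split=> // t; rewrite inE => /eqP ->.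
Qed.

Definition nonunital_args L : Prop :=
  foldr (fun t P => [/\ nonunital (s3_x t), nonunital (s3_y t)
                      & nonunital (s3_z t)] /\ P) True L.

Lemma as2_Tideal_s3_comb L : nonunital_args L -> as2_Tideal (s3_comb L).
Proof.
rewrite /s3_comb; elim: L => [_|t L IH [[x0 y0 z0] L_nu]].
  by rewrite big_nil; apply: as2_Tideal0.
rewrite big_cons; apply: as2_TidealD (IH L_nu).
by rewrite -scaler_int; apply/as2_TidealZ/as2_Tideal_s3.
Qed.

Lemma as2_eq_of_s3_comb (N : nat) x y L :
  (x - y) *~ N = s3_comb L -> N%:R != 0 :> F -> nonunital_args L ->
  as2_eq x y.
Proof.
move=> comb N_neq0 L_nu; rewrite /as2_eq.
have -> : x - y = N%:R^-1 *: ((x - y) *~ N).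
  by rewrite -scaler_int scalerA mulVf // scale1r.
by rewrite comb; apply/as2_TidealZ/as2_Tideal_s3_comb.
Qed.

End SecondTypeIdeal.

(* [cbv] with an explicit list, as [simpl] on products in [freeAs F] is very
   slow. *)
Ltac nonunital_args_auto :=
  cbv [nonunital_args foldr s3_x s3_y s3_z];
  repeat match goal with
  | |- _ /\ _ => split
  | |- and3 _ _ _ => split
  | |- True => exact: I
  | |- nonunital (_ * _) => apply: nonunitalM
  | |- nonunital _ => assumption
  end.

Theorem mainTheorem1 (F : fieldType) (charF0 : [pchar F] =i pred0)
  (a b c d e : freeAs F) :
  nonunital a -> nonunital b -> nonunital c -> nonunital d -> nonunital e ->
  [/\ as2_eq (d * c * a * b)
        (d * c * b * a + c * d * a * b - c * d * b * a + a * d * c * b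
         - a * c * d * b),
      as2_eq (a * b * c * d * e) (a * b * d * c * e)
    & as2_eq (a * b * d * c * e) (a * c * b * d * e)].
Proof.
move=> a0 b0 c0 d0 e0.
have N_neq0 (N : nat) : N != 0%N -> N%:R != 0 :> F by move/pcharf0P: charF0 ->.
split.
- apply: (as2_eq_of_s3_comb (dcab_certP a b c d));
    first by apply: N_neq0.
  by rewrite /dcab_cert; nonunital_args_auto.
- apply: (as2_eq_of_s3_comb (abcde_abdce_certP a b c d e));
    first by apply: N_neq0.
  by rewrite /abcde_abdce_cert; nonunital_args_auto.
- apply: (as2_eq_of_s3_comb (abdce_acbde_certP a b c d e));
    first by apply: N_neq0.
  by rewrite /abdce_acbde_cert; nonunital_args_auto.
Qed.
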